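(* Let $G=D_n\times\mathbb Z/2$ and $H=D_n\times\{0\}$. Consider admissible homomorphisms $f:T(2,2,2,2,2,2)\to G$ for cover type I, i.e. surjective homomorphisms with each $f(\gamma_i)$ of order $2$ and with second component of $f(\gamma_i)$ equal to $1$ for all $i$, up to equivalence. Then: if $n$ is odd, the only admissible Hurwitz vector up to equivalence is $((y,1),(y,1),(yx,1),(yx,1),(e,1),(e,1))$; if $n=2m$ is even, every admissible Hurwitz vector is equivalent to one of $((y,1),(y,1),(yx,1),(yx,1),(e,1),(e,1))$, $((y,1),(yx^m,1),(yx,1),(yx,1),(x^m,1),(e,1))$, $((y,1),(yx^m,1),(yx^2,1),(yx^2,1),(x^m,1),(e,1))$ (this last one only when $m$ is odd); and for $n=2$ there are in addition the possibilities $((y,1),(y,1),(x,1),(x,1),(e,1),(e,1))$ and $((y,1),(yx,1),(x,1),(x,1),(x,1),(e,1))$.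
   Context: $D_n=\langle x,y\mid x^n=y^2=1,\ yxy^{-1}=x^{-1}\rangle$ with neutral element $e$; $\mathbb Z/2$ is written additively with generator $1$. $T(m_1,\dots,m_r):=\langle\gamma_1,\dots,\gamma_r\mid \gamma_1\cdots\gamma_r=1,\ \gamma_i^{m_i}=1\rangle$. The Hurwitz vector of $f$ is $(f(\gamma_1),\dots,f(\gamma_r))$; conversely a tuple $(v_1,\dots,v_r)$ of elements of $G$ with $v_1\cdots v_r=1$ defines such an $f$. The braid group $\mathcal B_r=\langle\sigma_1,\dots,\sigma_{r-1}\rangle$ acts on Hurwitz vectors by $\sigma_i:(\dots,v_i,v_{i+1},\dots)\mapsto(\dots,v_iv_{i+1}v_i^{-1},v_i,\dots)$, and $\mathrm{Aut}(G)_H$, the automorphisms of $G$ preserving $H$, acts componentwise. Two admissible $f,f'$ are equivalent if their Hurwitz vectors lie in the same $\mathcal B_r\times\mathrm{Aut}(G)_H$-orbit. *)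

From HB Require Import structures.
From mathcomp Require Import all_boot all_order all_algebra all_fingroup.
From Stdlib Require Import Relation_Operators.
Set Implicit Arguments.
Unset Strict Implicit.
Unset Printing Implicit Defensive.
Import GRing.Theory.

(* The dihedral group D_n of order 2n, modelled concretely: the pair (k, b)  *)
(* stands for x^k y^b, with k in Z/n.  Since y x y^-1 = x^-1 we get          *)
(*   x^k1 y^b1 * x^k2 y^b2 = x^(k1 + (-1)^b1 k2) y^(b1 + b2).                *)
(* ('Z_n is Z/nZ only for n >= 2, which is assumed in the theorem.)          *)

Definition dihedral (n : nat) : Type := ('Z_n * bool)%type.

Section Dihedral.
Variable n : nat.
Local Open Scope ring_scope.

HB.instance Definition _ := Finite.copy (dihedral n) ('Z_n * bool)%type.

Definition dih_mul (u v : dihedral n) : dihedral n :=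
  (u.1 + (if u.2 then - v.1 else v.1), u.2 (+) v.2).
Definition dih_one : dihedral n := (0, false).
Definition dih_inv (u : dihedral n) : dihedral n :=
  (if u.2 then u.1 else - u.1, u.2).

Lemma dih_mulA : associative dih_mul.
Proof.
case=> [a b] [c d] [e f]; rewrite /dih_mul /=.
congr (_, _); last by rewrite addbA.
by case: b; case: d => /=; rewrite ?opprD ?opprK addrA.
Qed.

Lemma dih_mul1 : left_id dih_one dih_mul.
Proof. by case=> a b; rewrite /dih_mul /= add0r. Qed.

Lemma dih_mulV : left_inverse dih_one dih_inv dih_mul.
Proof.
case=> a [|]; rewrite /dih_mul /dih_one /=; congr (_, _);
  by rewrite ?subrr ?addNr.
Qed.

HB.instance Definition _ :=
  Finite_isGroup.Build (dihedral n) dih_mulA dih_mul1 dih_mulV.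

Definition dih_x : dihedral n := (1, false).
Definition dih_y : dihedral n := (0, true).

End Dihedral.

(* G = D_n x Z/2 (direct product group; Z/2 = 'Z_2, written additively,  *)
(* i.e. its group law is addition and its neutral element is 0).          *)
Definition GT (n : nat) : finGroupType := (dihedral n * 'Z_2)%type.

Definition Hsub (n : nat) : {set GT n} := [set g : GT n | g.2 == 0%R].

Local Open Scope group_scope.

(* Hurwitz vectors are represented as sequences (of length 6 here). *)

(* admissible for cover type I, T(2,2,2,2,2,2) -> G:
   the tuple has length 6, product 1 (so it defines a homomorphism from T),
   each entry has order 2, second component 1, and the entries generate G
   (i.e. the homomorphism is surjective). *)
Definition admissible (n : nat) (v : seq (GT n)) : Prop :=
  [/\ size v = 6%N,
      \prod_(g <- v) g = 1,
      (forall g, g \in v -> #[g] = 2%N),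
      (forall g, g \in v -> g.2 = 1%R :> 'Z_2)
    & <<[set g in v]>> = [set: GT n]].

(* Braid generator sigma_(i+1) acting on positions i, i+1 (0-based):
   (.., v_i, v_(i+1), ..) |-> (.., v_i v_(i+1) v_i^-1, v_i, ..) *)
Definition braid_sigma (gT : finGroupType) (i : nat) (s : seq gT) : seq gT :=
  let a := nth 1 s i in
  let b := nth 1 s i.+1 in
  take i s ++ [:: a * b * a^-1; a] ++ drop i.+2 s.

Definition AutH (n : nat) : {set {perm GT n}} :=
  [set a in Aut [set: GT n] | a @: Hsub n == Hsub n].

Inductive hstep (n : nat) : seq (GT n) -> seq (GT n) -> Prop :=
  | hstep_braid (i : nat) (s : seq (GT n)) :
      (i.+1 < size s)%N -> hstep s (braid_sigma i s)
  | hstep_aut (a : {perm GT n}) (s : seq (GT n)) :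
      a \in AutH n -> hstep s (map a s).

(* equivalence = lying in the same orbit of the group generated by the
   sigma_i and Aut(G)_H, i.e. the equivalence closure of hstep. *)
Definition hequiv (n : nat) : seq (GT n) -> seq (GT n) -> Prop :=
  clos_refl_sym_trans (seq (GT n)) (@hstep n).

Definition gx (n : nat) : dihedral n := dih_x n.
Definition gy (n : nat) : dihedral n := dih_y n.
Definition ge (n : nat) : dihedral n := 1.

Definition w1 (n : nat) (d : dihedral n) : GT n := (d, 1%R).

From HB Require Import structures.
From mathcomp Require Import all_boot all_order all_algebra all_fingroup all_solvable.
From Stdlib Require Import Relation_Operators.
From mathcomp Require Import ring zify.
Set Implicit Arguments.
Unset Strict Implicit.
Unset Printing Implicit Defensive.
Import GRing.Theory.

(** The entries of an admissible vector are (x^j y, 1) or (x^k, 1) with x^(2k) = 1, and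
    the latter are central.  The parity of the product and the generation of G leave two
    or four reflections.  With four, move the central entries to the end, run a
    subtractive Euclidean algorithm on the reflections by braid moves, and twist by a
    central rotation: the product relation then gives the shape
    (x^a y, x^a y, x^c y, x^(c+k) y, 1, x^k) with 2k = 0 (all second components 1).
    Generation puts 1 in (c - a) Z/n + k Z/n, so c - a or c - a + k is a unit, and an
    affine automorphism x |-> x^u, y |-> x^w y reaches (y, x^k y, yx, yx, x^k, e).  With
    two reflections, generation forces n = 2, where twisting by the central y exchanges
    reflections and rotations.  Finally 2k = 0 forces k = 0 for odd n and k in {0, m}
    for n = 2m. *)

Section TwoTorsion.
Local Open Scope ring_scope.

Lemma Z2_cases (c : 'Z_2) : c = 0 \/ c = 1.
Proof. by case: c => [[|[|]]] // ?; [left | right]; apply: val_inj. Qed.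

Lemma unit_or_addr_unit (R : comUnitRingType) (k u w1 w2 : R) :
  k + k = 0 -> (forall z, z + z = 0 -> z = 0 \/ z = k) -> u * w1 + k * w2 = 1 ->
  u \is a GRing.unit \/ u + k \is a GRing.unit.
Proof.
move=> kk two_torsion bezout.
have [kw0|kwk] : k * w2 = 0 \/ k * w2 = k.
    by apply: two_torsion; rewrite -mulrDl kk mul0r.
  by left; apply/unitrPr; exists w1; rewrite -bezout kw0 addr0.
have uw : u * w1 = 1 + k by rewrite -bezout kwk -addrA kk addr0.
have sq : (1 + k) * (1 + k) = 1 + k * k.
  by rewrite mulrDl !mulrDr !mul1r mulr1 addrA -(addrA 1) kk addr0.
have [k20|k2k] : k * k = 0 \/ k * k = k.
    by apply: two_torsion; rewrite -mulrDl kk mul0r.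
  by left; apply/unitrPr; exists (w1 * (1 + k)); rewrite mulrA uw sq k20 addr0.
have sqk : (1 + k) * (1 + k) + k = 1 by rewrite sq k2k -addrA kk addr0.
have [uk0|ukk] : u * k = 0 \/ u * k = k.
    by apply: two_torsion; rewrite -mulrDr kk mulr0.
  right; apply/unitrPr; exists (w1 * (1 + k) + k).
  have kw : k * (w1 * (1 + k)) = 0.
    by rewrite mulrCA mulrDr mulr1 k2k kk mulr0.
  by rewrite mulrDl !(mulrDr _ (w1 * (1 + k))) mulrA uw uk0 kw k2k addr0 add0r sqk.
left; apply/unitrPr; exists (w1 * (1 + k) + k).
by rewrite mulrDr mulrA uw ukk.
Qed.

Variable n : nat.
Implicit Types (k u z : 'Z_n).

Lemma nat_of_Zp_gt0 z : z != 0 -> (0 < z)%N.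
Proof. by move=> z_neq0; rewrite lt0n; apply: contra z_neq0 => /eqP z0; apply/eqP/val_inj. Qed.

Lemma Zp_two_torsion z : z + z = 0 -> z != 0 -> (2 * z)%N = (Zp_trunc n).+2.
Proof.
move=> /(congr1 val) /= /eqP zz /nat_of_Zp_gt0 z_gt0.
have /dvdnP[q zzE] : ((Zp_trunc n).+2 %| z + z)%N by [].
have := ltn_ord z; case: q zzE => [|[|q]]; lia.
Qed.

Lemma Zp_two_torsion_eq z k :
  z + z = 0 -> k + k = 0 -> k != 0 -> z = 0 \/ z = k.
Proof.
move=> zz kk k_neq0; have [->|z_neq0] := eqVneq z 0; [by left | right].
by apply: val_inj => /=; have := Zp_two_torsion zz z_neq0; have := Zp_two_torsion kk k_neq0; lia.
Qed.

Lemma Zp_two_torsion_odd k : odd (Zp_trunc n).+2 -> k + k = 0 -> k = 0.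
Proof.
move=> odd_N kk; apply/eqP/negP => /negP k_neq0.
by move: odd_N; rewrite -(Zp_two_torsion kk k_neq0) oddM.
Qed.

Lemma Zp_two_torsion_half m k : (Zp_trunc n).+2 = (2 * m)%N ->
  k + k = 0 -> k != 0 -> k = m%:R.
Proof.
move=> NE kk k_neq0; have km : nat_of_ord k = m.
  by apply/eqP; rewrite -(eqn_pmul2l (isT : 0 < 2)%N) -NE Zp_two_torsion.
by rewrite -(natr_Zp k) km.
Qed.

Lemma unit_mulr_two_torsion u k : u \is a GRing.unit -> k + k = 0 -> u * k = k.
Proof.
move=> u_unit kk; have [->|k_neq0] := eqVneq k 0; first by rewrite mulr0.
have [uk0|//] : u * k = 0 \/ u * k = k.
  by apply: Zp_two_torsion_eq => //; rewrite -mulrDr kk mulr0.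
by case/negP: k_neq0; apply/eqP/(mulrI u_unit); rewrite uk0 mulr0.
Qed.

Lemma nat_of_Zp_sub (x y : 'Z_n) : (y <= x)%N -> nat_of_ord (x - y) = (x - y)%N.
Proof.
move=> le_yx /=; have := ltn_ord x; have := ltn_ord y.
have [->|y_gt0] := posnP y; first by rewrite !subn0 modnn addn0 => _ /modn_small.
move=> lt_y lt_x; rewrite [((_ - y) %% _)%N]modn_small; last by lia.
have -> : (x + ((Zp_trunc n).+2 - y) = x - y + (Zp_trunc n).+2)%N by lia.
by rewrite modnDr modn_small //; lia.
Qed.

End TwoTorsion.

Local Open Scope group_scope.

Lemma gen_rmul_ind (gT : finGroupType) (A : {set gT}) (P : gT -> Prop) :
  P 1 -> (forall g h, P g -> h \in A -> P (g * h)) -> forall g, g \in <<A>> -> P g.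
Proof.
move=> P1 PM g /gen_prodgP[k [c Ac ->]].
elim: k c Ac => [|k IHk] c Ac; first by rewrite big_ord0.
rewrite big_ord_recr /=; apply: PM (Ac _).
exact: (IHk (fun i => c (widen_ord (leqnSn k) i))).
Qed.

(** * Braid moves *)

Section BraidEquivalence.
Variable gT : finGroupType.
Implicit Types (g h : gT) (l r s t : seq gT).

Definition braid_step s t := exists2 i, (i.+1 < size s)%N & t = braid_sigma i s.
Definition braid_equiv := clos_refl_sym_trans _ braid_step.

Lemma braid_equiv_refl s : braid_equiv s s. Proof. exact: rst_refl. Qed.
Lemma braid_equiv_sym s t : braid_equiv s t -> braid_equiv t s. Proof. exact: rst_sym. Qed.
Lemma braid_equiv_trans s t u : braid_equiv s t -> braid_equiv t u -> braid_equiv s u.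
Proof. exact: rst_trans. Qed.

Lemma braid_sigma_cat l i s : braid_sigma (size l + i)%N (l ++ s) = l ++ braid_sigma i s.
Proof. by elim: l => //= g l <-. Qed.

Lemma braid_sigma_split i s : i.+1 < size s ->
  exists l g h r, s = l ++ g :: h :: r /\ braid_sigma i s = l ++ g * h * g^-1 :: g :: r.
Proof.
move=> lt_i1s; exists (take i s), (nth 1 s i), (nth 1 s i.+1), (drop i.+2 s).
split=> //; rewrite -{1}(cat_take_drop i s) (drop_nth 1) ?(drop_nth 1 lt_i1s) //.
exact: ltnW.
Qed.

Lemma braid_equiv_cat l s t : braid_equiv s t -> braid_equiv (l ++ s) (l ++ t).
Proof.
elim=> {s t} [s t [i lt_i1s ->]|s|s t _ IH|s t u _ IH1 _ IH2].
- apply: rst_step; exists (size l + i)%N; first by rewrite size_cat -addnS ltn_add2l.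
  by rewrite braid_sigma_cat.
- exact: braid_equiv_refl.
- exact: braid_equiv_sym.
- exact: braid_equiv_trans IH2.
Qed.

Lemma braid_equiv_cons g s t : braid_equiv s t -> braid_equiv (g :: s) (g :: t).
Proof. exact: (braid_equiv_cat [:: g]). Qed.

Lemma braid_equiv_conj g h r : braid_equiv (g :: h :: r) (g * h * g^-1 :: g :: r).
Proof. by apply: rst_step; exists 0%N; rewrite //= /braid_sigma /= drop0. Qed.

Lemma braid_equiv_swap g h r : commute g h -> braid_equiv (g :: h :: r) (h :: g :: r).
Proof. by move=> cgh; rewrite -{2}(mulgK g h) -cgh; apply: braid_equiv_conj. Qed.

Lemma braid_equiv_involution_pair g h r : g * g = 1 ->
  braid_equiv (g :: g :: h :: r) (h :: g :: g :: r).
Proof.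
move=> gg1; have gV : g^-1 = g by rewrite -[g^-1]mulg1 -gg1 mulKg.
apply: braid_equiv_trans (braid_equiv_cons g (braid_equiv_conj g h r)) _.
suff {2}-> : h = g * (g * h * g^-1) * g^-1 by apply: braid_equiv_conj.
by rewrite gV !mulgA gg1 mul1g -mulgA gg1 mulg1.
Qed.

Lemma braid_equiv_central g l r : (forall h, commute g h) ->
  braid_equiv (g :: l ++ r) (l ++ g :: r).
Proof.
move=> cg; elim: l => [|h l IHl] /=; first exact: braid_equiv_refl.
exact: braid_equiv_trans (braid_equiv_swap _ (cg h)) (braid_equiv_cons h IHl).
Qed.

Lemma braid_equiv_partition (p : pred gT) s :
  {in s, forall g, ~~ p g -> forall h, commute g h} ->
  braid_equiv s (filter p s ++ filter (predC p) s).
Proof.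
elim: s => [|g s IHs] cs /=; first exact: braid_equiv_refl.
have {}IHs : braid_equiv s (filter p s ++ filter (predC p) s).
  by apply: IHs => h sh; apply: cs; rewrite inE sh orbT.
case pg: (p g) => /=; first exact: braid_equiv_cons.
apply: braid_equiv_trans (braid_equiv_cons g IHs) _.
by apply: braid_equiv_central; apply: cs; rewrite ?mem_head ?pg.
Qed.

Lemma prod_braid l g h r :
  \prod_(x <- l ++ g :: h :: r) x = \prod_(x <- l ++ g * h * g^-1 :: g :: r) x.
Proof. by rewrite !big_cat !big_cons /= !mulgA mulgKV. Qed.

Lemma gen_braid l g h r :
  <<[set x in l ++ g :: h :: r]>> = <<[set x in l ++ g * h * g^-1 :: g :: r]>>.
Proof.
set A := [set x in _ ++ g :: h :: r]; set B := [set x in _ ++ _ :: g :: r].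
have memA x : x \in l ++ g :: h :: r -> x \in <<A>> by move=> ?; rewrite mem_gen ?inE.
have memB x : x \in l ++ g * h * g^-1 :: g :: r -> x \in <<B>>.
  by move=> ?; rewrite mem_gen ?inE.
have gA : g \in <<A>> by rewrite memA // mem_cat mem_head orbT.
have gB : g \in <<B>> by rewrite memB // mem_cat !inE eqxx !orbT.
apply/eqP; rewrite eqEsubset !gen_subG; apply/andP; split; apply/subsetP=> x;
  rewrite inE mem_cat !inE => /or4P[lx|/eqP->|/eqP->|rx].
- by rewrite memB // mem_cat lx.
- exact: gB.
- have ghgB : g * h * g^-1 \in <<B>> by rewrite memB // mem_cat mem_head orbT.
  have -> : h = g^-1 * (g * h * g^-1) * g by rewrite !mulgA mulVg mul1g mulgKV.
  by rewrite groupMr // groupMl ?groupV.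
- by rewrite memB // mem_cat !inE rx !orbT.
- by rewrite memA // mem_cat lx.
- by rewrite !groupM ?groupV // memA // mem_cat !inE eqxx !orbT.
- exact: gA.
- by rewrite memA // mem_cat !inE rx !orbT.
Qed.

End BraidEquivalence.

Section Twist.
Variables (D : finGroupType) (z : D).
Hypotheses (zz : z * z = 1) (z_central : forall d, commute d z).

Definition twist (g : D * 'Z_2) : D * 'Z_2 := (g.1 * (if g.2 == 1%R then z else 1), g.2).

Lemma twistM : {morph twist : g h / g * h}.
Proof.
move=> [d c] [d' c']; rewrite /twist /=; congr (_, _).
case: (Z2_cases c) => ->; case: (Z2_cases c') => -> /=; rewrite ?mulg1 //.
- by rewrite mulgA.
- by rewrite -!mulgA z_central.
- by rewrite -!mulgA (mulgA z) -z_central -mulgA zz mulg1.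
Qed.

Lemma twist_inj : injective twist.
Proof. by move=> [d c] [d' c'] [+ eq_c]; rewrite -eq_c => /mulIg ->. Qed.

End Twist.

(** * Equivalence preserves admissibility *)

Section HurwitzVectors.
Variable n : nat.
Local Open Scope ring_scope.
Local Open Scope group_scope.
Local Notation G := (GT n).
Implicit Types (g h : G) (s t v : seq G).

Lemma braid_equiv_hequiv s t : braid_equiv s t -> hequiv s t.
Proof.
elim=> {s t} [s t [i lt_i1s ->]|s|s t _|s t u _ IH1 _ IH2].
- exact/rst_step/hstep_braid.
- exact: rst_refl.
- exact: rst_sym.
- exact: rst_trans IH2.
Qed.

Lemma conjg_snd g h : (g ^ h).2 = g.2.
Proof.
have -> : (g ^ h).2 = (- h.2 + (g.2 + h.2))%R by reflexivity.
by rewrite addrCA addNr addr0.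
Qed.

Lemma admissible_conj_closed s t :
  size s = size t -> \prod_(g <- s) g = \prod_(g <- t) g ->
  <<[set g in s]>> = <<[set g in t]>> ->
  {in t, forall g, exists2 h, h \in s & exists x, g = h ^ x} ->
  admissible s -> admissible t.
Proof.
move=> sz_st prod_st gen_st conj_ts [sz6 prod1 ord2 snd1 gen_s]; split.
- by rewrite -sz_st.
- by rewrite -prod_st.
- by move=> g /conj_ts[h sh [x ->]]; rewrite orderJ ord2.
- by move=> g /conj_ts[h sh [x ->]]; rewrite conjg_snd snd1.
- by rewrite -gen_st.
Qed.

Lemma admissible_braid l g h r :
  admissible (l ++ g :: h :: r) <-> admissible (l ++ g * h * g^-1 :: g :: r).
Proof.
have self x s : x \in s -> exists2 y, y \in s & exists z, x = y ^ z.
  by move=> sx; exists x => //; exists 1; rewrite conjg1.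
split=> adm; apply: admissible_conj_closed adm; rewrite ?size_cat //.
- exact: prod_braid.
- exact: gen_braid.
- move=> x; rewrite mem_cat !inE => /or4P[lx|/eqP->|/eqP->|rx];
    try by apply: self; rewrite mem_cat ?inE ?lx ?rx ?eqxx ?orbT.
  exists h; first by rewrite mem_cat !inE eqxx !orbT.
  by exists g^-1; rewrite conjgE invgK mulgA.
- exact: esym (prod_braid l g h r).
- exact: esym (gen_braid l g h r).
- move=> x; rewrite mem_cat !inE => /or4P[lx|/eqP->|/eqP->|rx];
    try by apply: self; rewrite mem_cat ?inE ?lx ?rx ?eqxx ?orbT.
  exists (g * h * g^-1); first by rewrite mem_cat mem_head orbT.
  by exists g; rewrite conjgE !mulgA mulVg mul1g mulgKV.
Qed.

Lemma braid_equiv_admissible s t : braid_equiv s t -> admissible s <-> admissible t.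
Proof.
elim=> {s t} [s t [i lt_i1s ->]|s|s t _ IH|s t u _ IH1 _ IH2].
- by have [l [g [h [r [-> ->]]]]] := braid_sigma_split lt_i1s; apply: admissible_braid.
- by [].
- by rewrite IH.
- by rewrite IH1.
Qed.

Section CoordinateMorphism.
Variable f : G -> G.
Hypotheses (fM : {morph f : x y / x * y}) (f_inj : injective f).
Hypothesis f_snd : forall g, (f g).2 = g.2.

Lemma morph_f1 : f 1 = 1.
Proof. by apply: (mulgI (f 1)); rewrite -fM !mulg1. Qed.

Lemma hequiv_map s : hequiv s (map f s).
Proof.
pose a := perm f_inj.
have aH : a \in AutH n.
  rewrite !inE; apply/andP; split.
    apply/andP; split; first by apply/subsetP=> x; rewrite inE.
    by apply/morphicP=> x y _ _; rewrite !permE.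
  rewrite eqEcard card_imset ?leqnn ?andbT; last exact: perm_inj.
  by apply/subsetP=> _ /imsetP[g gH ->]; move: gH; rewrite !inE permE f_snd.
rewrite (eq_map (g := a)); last by move=> x; rewrite permE.
exact/rst_step/hstep_aut.
Qed.

Lemma admissible_map s : admissible s -> admissible (map f s).
Proof.
case=> sz6 prod1 ord2 snd1 gen_s; split.
- by rewrite size_map.
- by rewrite big_map -(big_morph f fM morph_f1) prod1 morph_f1.
- move=> _ /mapP[g sg ->]; apply: nt_prime_order => //.
    by rewrite expgS expg1 -fM -expg2 -(ord2 g sg) expg_order morph_f1.
  apply: contra_eqN (ord2 g sg) => /eqP fg1.
  by rewrite (f_inj (etrans fg1 (esym morph_f1))) order1.
- by move=> _ /mapP[g sg ->]; rewrite f_snd snd1.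
- apply/eqP; rewrite eqEsubset subsetT /=; apply/subsetP=> x _.
  rewrite -(f_invF f_inj x).
  apply: (gen_rmul_ind (A := [set g in s]) (P := fun g => f g \in <<[set x in map f s]>>)).
  + by rewrite morph_f1 group1.
  + by move=> y z fy; rewrite inE => sz; rewrite fM groupM // mem_gen // inE map_f.
  + by rewrite gen_s inE.
Qed.

End CoordinateMorphism.

End HurwitzVectors.

(** * Reduction to a normal form *)

Section DihedralCoordinates.
Variable n : nat.
Local Open Scope ring_scope.
Local Notation G := (GT n).
Implicit Types (g h : G) (s v : seq G) (a b c j k u w : 'Z_n).

Definition refl (j : 'Z_n) : G := ((j, true), 1).
Definition rot (k : 'Z_n) : G := ((k, false), 1).

Lemma dihedral_mulE (d e : dihedral n) :
  (d * e)%g = (d.1 + (if d.2 then - e.1 else e.1), d.2 (+) e.2).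
Proof. by []. Qed.

Lemma dihedral_xX m : (dih_x n ^+ m)%g = (m%:R, false).
Proof. by elim: m => // m IHm; rewrite expgS IHm dihedral_mulE /= mulrS. Qed.

Lemma mulGE g h :
  (g * h)%g = (g.1.1 + (if g.1.2 then - h.1.1 else h.1.1), g.1.2 (+) h.1.2, g.2 + h.2).
Proof. by []. Qed.

Lemma conj_refl a b : (refl a * refl b * (refl a)^-1)%g = refl (a + a - b).
Proof. by rewrite /refl !mulGE /= addrAC; congr (_, _, _); apply: val_inj. Qed.

Lemma braid_equiv_reflect a b r :
  braid_equiv (refl a :: refl b :: r) (refl (a + a - b) :: refl a :: r).
Proof. by rewrite -conj_refl; apply: braid_equiv_conj. Qed.

Lemma braid_equiv_reflect_inv a b r :
  braid_equiv (refl a :: refl b :: r) (refl b :: refl (b + b - a) :: r).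
Proof.
rewrite -{1}[a](_ : b + b - (b + b - a) = a); last by rewrite opprB addrC subrK.
exact/braid_equiv_sym/braid_equiv_reflect.
Qed.

Lemma dihedral_central_rot (k : 'Z_n) (d : dihedral n) :
  k + k = 0 -> commute d (k, false).
Proof.
move=> kk; have kN : - k = k by apply: addr0_eq.
by case: d => j [|]; rewrite /commute !dihedral_mulE /= ?kN addrC.
Qed.

Lemma rot_central k g : k + k = 0 -> commute (rot k) g.
Proof.
move=> kk; have kN : - k = k by apply: addr0_eq.
case: g => [[j b] c]; rewrite /commute !mulGE /= addbF.
by congr (_, _, _); rewrite addrC //; case: b; rewrite ?kN.
Qed.

Lemma admissible_entry v g : admissible v -> g \in v ->
  g = if g.1.2 then refl g.1.1 else rot g.1.1.
Proof. by case=> _ _ _ snd1 _ /snd1; case: g => [[j []] c] /= ->. Qed.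

Lemma admissible_rot v k : admissible v -> rot k \in v -> k + k = 0.
Proof.
case=> _ _ ord2 _ _ /ord2 ord_rot.
by have := expg_order (rot k); rewrite ord_rot expgS expg1 => /(congr1 (fun g => g.1.1)).
Qed.

Lemma admissible_ind v (P : G -> Prop) : admissible v ->
  P 1%g -> (forall g h, P g -> h \in v -> P (g * h)%g) -> forall g, P g.
Proof.
case=> _ _ _ _ gen_v P1 PM g.
apply: (gen_rmul_ind (A := [set h in v])) => [//|x h Px|]; last by rewrite gen_v inE.
by rewrite inE; apply: PM.
Qed.

Definition is_refl g : bool := g.1.2.

Lemma prod_is_refl s : (\prod_(g <- s) g)%g.1.2 = odd (count is_refl s).
Proof.
elim: s => [|g s IHs]; first by rewrite big_nil.
by rewrite big_cons mulGE /= IHs oddD oddb.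
Qed.

Lemma admissible_count_refl v : admissible v ->
  count is_refl v = 2%N \/ count is_refl v = 4%N.
Proof.
move=> adm; have [sz6 prod1 _ snd1 _] := adm.
have even_count : ~~ odd (count is_refl v) by rewrite -prod_is_refl prod1.
have has_refl : has is_refl v.
  apply/negPn/negP => /hasPn no_refl.
  suff : ~~ (((0, true), 0) : G).1.2 by [].
  apply: (admissible_ind (P := fun g => ~~ g.1.2) adm) => // g h rg /no_refl.
  by rewrite mulGE /is_refl /= => /negbTE->; rewrite addbF.
have has_rot : has (predC is_refl) v.
  apply/negPn/negP => /hasPn all_refl.
  suff : (((0, false), 1) : G).1.2 == ((((0, false), 1) : G).2 == 1) by [].
  apply: (admissible_ind (P := fun g => g.1.2 == (g.2 == 1)) adm) => // g h /eqP gE vh.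
  have /negPn rh : ~~ ~~ h.1.2 := all_refl h vh.
  rewrite mulGE /= gE rh (snd1 h vh).
  by case: (Z2_cases g.2) => ->.
move: even_count has_refl has_rot (count_predC is_refl v); rewrite !has_count sz6.
by case: (count is_refl v) => [|[|[|[|[|[|[|]]]]]]] //=; lia.
Qed.

Lemma braid_equiv_sort v : admissible v ->
  braid_equiv v ([seq refl g.1.1 | g <- filter is_refl v] ++
                 [seq rot g.1.1 | g <- filter (predC is_refl) v]).
Proof.
move=> adm; have entry g : g \in v -> g = if is_refl g then refl g.1.1 else rot g.1.1.
  exact: admissible_entry adm.
have -> : [seq refl g.1.1 | g <- filter is_refl v] = filter is_refl v.
  rewrite -[RHS]map_id; apply/eq_in_map => g.
  by rewrite mem_filter => /andP[rg /entry gE]; rewrite /= {2}gE rg.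
have -> : [seq rot g.1.1 | g <- filter (predC is_refl) v] = filter (predC is_refl) v.
  rewrite -[RHS]map_id; apply/eq_in_map => g.
  by rewrite mem_filter => /andP[/negbTE rg /entry gE]; rewrite /= {2}gE rg.
apply: braid_equiv_partition => g vg /negbTE rg h.
have gE : g = rot g.1.1 by rewrite {1}(entry g vg) rg.
by rewrite gE; apply: rot_central; apply: (admissible_rot adm); rewrite -gE.
Qed.

(* Writing g = x^t (x^a y)^b, [offset a g] is t, a crossed homomorphism G -> Z/n. *)
Definition offset (a : 'Z_n) (g : G) : 'Z_n := g.1.1 - (if g.1.2 then a else 0).

Lemma offsetM a g h :
  offset a (g * h)%g = offset a g + (if g.1.2 then - offset a h else offset a h).
Proof. by case: g h => [[j []] c] [[j' []] c']; rewrite /offset mulGE /=; ring. Qed.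

Lemma admissible_offset v a (S : {pred 'Z_n}) : admissible v -> zmod_closed S ->
  {in v, forall g, offset a g \in S} -> 1 \in S.
Proof.
move=> adm [S0 SB] Sv.
have SN x : x \in S -> - x \in S by move=> Sx; rewrite -sub0r SB.
suff : offset a ((1, false), 0) \in S by rewrite /offset /= subr0.
apply: (admissible_ind (P := fun g => offset a g \in S) adm); first by rewrite /offset /= subr0.
have SD x y : x \in S -> y \in S -> x + y \in S.
  by move=> Sx Sy; rewrite -[y]opprK SB ?SN.
by move=> g h Sg vh; rewrite offsetM SD //; case: (g.1.2); rewrite ?SN ?Sv.
Qed.

Definition affine (u w : 'Z_n) (g : G) : G :=
  ((u * g.1.1 + (if g.1.2 then w else 0), g.1.2), g.2).

Lemma affineM u w : {morph affine u w : g h / (g * h)%g}.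
Proof.
case=> [[j b] c] [[j' b'] c']; rewrite /affine !mulGE /=.
by congr (_, _, _); case: b; case: b' => /=; ring.
Qed.

Lemma affine_inj u w : u \is a GRing.unit -> injective (affine u w).
Proof.
move=> u_unit [[j b] c] [[j' b'] c'] eq_g.
have eq_b : b = b' := congr1 (fun g => g.1.2) eq_g.
have := congr1 (fun g => g.1.1) eq_g; rewrite /= eq_b => /addIr /(mulrI u_unit) ->.
by have /= -> := congr1 snd eq_g.
Qed.

Lemma hequiv_affine u w s : u \is a GRing.unit -> hequiv s (map (affine u w) s).
Proof. by move=> u_unit; exact: hequiv_map (affineM u w) (affine_inj u_unit) (fun=> erefl) s. Qed.

Lemma hequiv_twist (z : dihedral n) s : (z * z = 1)%g -> (forall d, commute d z) ->
  hequiv s (map (twist z) s).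
Proof. by move=> zz zC; exact: hequiv_map (twistM zz zC) (@twist_inj _ z) (fun=> erefl) s. Qed.

Lemma admissible_twist (z : dihedral n) s : (z * z = 1)%g -> (forall d, commute d z) ->
  admissible s -> admissible (map (twist z) s).
Proof.
by move=> zz zC; exact: admissible_map (twistM zz zC) (@twist_inj _ z) (fun=> erefl) s.
Qed.

(* Subtractive Euclidean algorithm on the differences a - b and b - c. *)
Lemma braid_equiv_reflect_pair a b c r : exists a' c',
  braid_equiv (refl a :: refl b :: refl c :: r) (refl a' :: refl a' :: refl c' :: r).
Proof.
have [N] := ubnP (nat_of_ord (a - b) + nat_of_ord (b - c)).
elim: N a b c => // N IHN a b c lt_N.
have [/eqP|ab_neq0] := eqVneq (a - b) 0.
  by rewrite subr_eq0 => /eqP->; exists b, c; apply: braid_equiv_refl.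
have [/eqP|bc_neq0] := eqVneq (b - c) 0.
  rewrite subr_eq0 => /eqP<-; exists (a + a - b), a.
  apply: braid_equiv_trans (braid_equiv_reflect _ _ _) _.
  exact/braid_equiv_cons/braid_equiv_reflect.
have := nat_of_Zp_gt0 ab_neq0; have := nat_of_Zp_gt0 bc_neq0.
case: (leqP (b - c)%R (a - b)%R) => le_bc_ab bc_gt0 ab_gt0.
- have [|a' [c' eqv]] := IHN a (b + b - c) b.
    rewrite (_ : a - (b + b - c) = (a - b) - (b - c)); last by ring.
    rewrite (_ : b + b - c - b = b - c); last by ring.
    by rewrite (nat_of_Zp_sub le_bc_ab); lia.
  exists a', c'; apply: braid_equiv_trans eqv.
  exact/braid_equiv_cons/braid_equiv_reflect.
- have [|a' [c' eqv]] := IHN b (b + b - a) c.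
    rewrite (_ : b - (b + b - a) = a - b); last by ring.
    rewrite (_ : b + b - a - c = (b - c) - (a - b)); last by ring.
    by rewrite (nat_of_Zp_sub (ltnW le_bc_ab)); lia.
  by exists a', c'; apply: braid_equiv_trans eqv; apply: braid_equiv_reflect_inv.
Qed.

(* In D_n this reads (y, x^k y, yx, yx, x^k, e); k = 0 and k = m (for n = 2m) give the
   first two vectors of the classification. *)
Definition normal_form (k : 'Z_n) : seq G :=
  [:: refl 0; refl k; refl (-1); refl (-1); rot k; rot 0].

(* The affine map j |-> -(a - c)^-1 (j - c) sends c to 0 and a to -1, and fixes the
   2-torsion element k. *)
Lemma hequiv_affine_normal_form a c k : k + k = 0 -> a - c \is a GRing.unit ->
  hequiv [:: refl c; refl (c + k); refl a; refl a; rot k; rot 0] (normal_form k).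
Proof.
move=> kk ac_unit; set u := - (a - c)^-1.
have u_unit : u \is a GRing.unit by rewrite unitrN unitrV.
have uk : u * k = k := unit_mulr_two_torsion u_unit kk.
have ua : u * a - u * c = -1 by rewrite -mulrBr mulNr mulVr.
suff -> : normal_form k = map (affine u (- (u * c)))
    [:: refl c; refl (c + k); refl a; refl a; rot k; rot 0] by apply: hequiv_affine.
by rewrite /= /affine /= !addr0 mulrDr uk subrr addrAC subrr add0r ua mulr0.
Qed.

Lemma gen_normal_form0 : <<[set g in normal_form 0]>>%g = [set: G].
Proof.
apply/eqP; rewrite eqEsubset subsetT /=; apply/subsetP=> -[[j b] c] _.
set A := [set _ in _].
have memA g : g \in normal_form 0 -> g \in <<A>>%g by move=> gv; apply: mem_gen; rewrite /A inE.
have Z2_11 : 1 + 1 = 0 :> 'Z_2 by apply: val_inj.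
pose xg : G := ((1, false), 0); pose yg : G := ((0, true), 0).
have xgE : xg = (refl 0 * refl (-1))%g by rewrite mulGE /= opprK add0r Z2_11.
have ygE : yg = (refl 0 * rot 0)%g by rewrite mulGE /= oppr0 addr0 Z2_11.
have rot_in : rot 0 \in <<A>>%g by apply: memA; rewrite !inE eqxx ?orbT.
have xg_in : xg \in <<A>>%g by rewrite xgE groupM ?memA // !inE eqxx ?orbT.
have yg_in : yg \in <<A>>%g by rewrite ygE groupM ?memA // !inE eqxx ?orbT.
have xgX m : (xg ^+ m)%g = ((m%:R, false), 0).
  by elim: m => // m IHm; rewrite expgS IHm mulGE /= mulrS addr0.
have j_in : ((j, false), 0) \in <<A>>%g by rewrite -[j]natr_Zp -xgX; apply: groupX.
have jb_in : ((j, b), 0) \in <<A>>%g.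
  case: b; last exact: j_in.
  rewrite (_ : (_, _, _) = ((((j, false), 0) : G) * yg)%g); first exact: groupM.
  by rewrite mulGE /= !addr0.
case: (Z2_cases c) => ->; first exact: jb_in.
rewrite (_ : (_, _, _) = ((((j, b), 0) : G) * rot 0)%g); first exact: groupM.
by rewrite mulGE /= add0r addbF; case: b {jb_in}; rewrite ?oppr0 addr0.
Qed.

Lemma normal_form0_admissible : admissible (normal_form 0).
Proof.
have order2 g : g.2 = 1 -> (g * g = 1)%g -> #[g]%g = 2%N.
  move=> g1 gg; apply: nt_prime_order => //.
  by apply/eqP => g1E; move: g1; rewrite g1E => /(congr1 val).
split=> //; last exact: gen_normal_form0.
- by rewrite !big_cons big_nil !mulGE /=; congr (_, _, _); [ring | apply: val_inj].
- move=> g; rewrite !inE => /or4P[|||/or3P[||]] /eqP-> ; apply: order2 => //;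
    by rewrite mulGE /= ?subrr ?addr0; congr (_, _, _); apply: val_inj.
- by move=> g; rewrite !inE => /or4P[|||/or3P[||]] /eqP->.
Qed.

Lemma admissible_bezout a c k :
  admissible [:: refl a; refl a; refl c; refl (c + k); rot 0; rot k] ->
  exists w1 w2, (c - a) * w1 + k * w2 = 1.
Proof.
(* Relative to a, the offsets of the entries are 0, 0, c - a, c - a + k, 0, k. *)
move=> adm; pose S := [pred y | [exists w : 'Z_n * 'Z_n, y == (c - a) * w.1 + k * w.2]].
suff /existsP[w /eqP bezout] : 1 \in S by exists w.1, w.2.
apply: (admissible_offset (a := a) adm).
  split; first by apply/existsP; exists (0, 0); rewrite !mulr0 addr0.
  move=> _ _ /existsP[[w1 w2] /eqP->] /existsP[[w1' w2'] /eqP->].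
  by apply/existsP; exists (w1 - w1', w2 - w2'); apply/eqP; rewrite /=; ring.
move=> g; rewrite !inE /offset => /or4P[|||/or3P[||]] /eqP-> /=; apply/existsP;
  [exists (0, 0) | exists (0, 0) | exists (1, 0) | exists (1, 1) | exists (0, 0) | exists (0, 1)];
  by apply/eqP; rewrite /=; ring.
Qed.

Lemma braid_equiv_pair_last a c d k : k + k = 0 ->
  braid_equiv [:: refl a; refl a; refl c; refl d; rot 0; rot k]
              [:: refl c; refl d; refl a; refl a; rot k; rot 0].
Proof.
move=> kk; have aa : (refl a * refl a)%g = 1%g.
  by rewrite mulGE /= subrr; congr (_, _, _); apply: val_inj.
apply: braid_equiv_trans (braid_equiv_involution_pair _ _ aa) _.
apply: braid_equiv_trans (braid_equiv_cons _ (braid_equiv_involution_pair _ _ aa)) _.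
apply: (braid_equiv_cat [:: refl c; refl d; refl a; refl a]).
by apply: braid_equiv_swap; apply: rot_central; rewrite addr0.
Qed.

Lemma hequiv_normal_form_paired a c d k :
  admissible [:: refl a; refl a; refl c; refl d; rot 0; rot k] ->
  k + k = 0 /\ hequiv [:: refl a; refl a; refl c; refl d; rot 0; rot k] (normal_form k).
Proof.
move=> adm; have kk : k + k = 0 by apply: (admissible_rot adm); rewrite !inE eqxx !orbT.
have dE : d = c + k.
  case: adm => _ + _ _ _; rewrite !big_cons big_nil !mulGE /= => /(congr1 (fun g => g.1.1)) /=.
  by move=> prod1; apply: subr0_eq; rewrite -oppr0 -prod1; ring.
subst d; split=> //; have [w1 [w2 bezout]] := admissible_bezout adm.
apply: rst_trans (braid_equiv_hequiv (braid_equiv_pair_last _ _ _ kk)) _.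
have [k0|k_neq0] := eqVneq k 0.
  move: bezout; rewrite k0 mul0r addr0 => bezout.
  apply: hequiv_affine_normal_form; first by rewrite addr0.
  by rewrite -opprB unitrN; apply/unitrPr; exists w1.
have [ca_unit|cak_unit] :=
  unit_or_addr_unit kk (fun z zz => Zp_two_torsion_eq zz kk k_neq0) bezout.
  by apply: hequiv_affine_normal_form => //; rewrite -opprB unitrN.
(* Otherwise c - a + k is a unit, and one braid move replaces c by c + k. *)
have reflect_c : braid_equiv [:: refl c; refl (c + k); refl a; refl a; rot k; rot 0]
                   [:: refl (c + k); refl (c + k + k); refl a; refl a; rot k; rot 0].
  have E : c + c - (c + k) = c + k by rewrite opprD addrACA subrr add0r (addr0_eq kk).
  rewrite -addrA kk addr0.
  by have := braid_equiv_reflect c (c + k) [:: refl a; refl a; rot k; rot 0]; rewrite E.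
apply: rst_trans (braid_equiv_hequiv reflect_c) _.
apply: hequiv_affine_normal_form => //.
by rewrite (_ : a - (c + k) = - (c - a + k)) ?unitrN //; ring.
Qed.

Lemma hequiv_normal_form_four_refl a1 a2 a3 a4 k5 k6 :
  admissible [:: refl a1; refl a2; refl a3; refl a4; rot k5; rot k6] ->
  exists2 k, k + k = 0 &
    hequiv [:: refl a1; refl a2; refl a3; refl a4; rot k5; rot k6] (normal_form k).
Proof.
move=> adm.
have [a [c eqv]] := braid_equiv_reflect_pair a1 a2 a3 [:: refl a4; rot k5; rot k6].
have {}adm := (braid_equiv_admissible eqv).1 adm.
have kk5 : k5 + k5 = 0 by apply: (admissible_rot adm); rewrite !inE eqxx !orbT.
(* Twisting by the central rotation x^k5 turns the fifth entry into (e, 1). *)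
pose z : dihedral n := (k5, false).
have zz : (z * z = 1)%g by rewrite dihedral_mulE /= kk5.
have zC d : commute d z := dihedral_central_rot d kk5.
have twistE : map (twist z) [:: refl a; refl a; refl c; refl a4; rot k5; rot k6] =
    [:: refl (a - k5); refl (a - k5); refl (c - k5); refl (a4 - k5); rot 0; rot (k6 + k5)].
  by rewrite /= /twist /= !dihedral_mulE /= kk5.
have := admissible_twist zz zC adm; rewrite twistE => /hequiv_normal_form_paired[kk eqv'].
exists (k6 + k5) => //.
apply: rst_trans (braid_equiv_hequiv eqv) _; apply: rst_trans (hequiv_twist _ zz zC) _.
by rewrite twistE.
Qed.

Lemma hequiv_normal_form_count4 v : admissible v -> count is_refl v = 4%N ->
  exists2 k, k + k = 0 & hequiv v (normal_form k).
Proof.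
move=> adm count4; have eqv := braid_equiv_sort adm.
have adm_sorted := (braid_equiv_admissible eqv).1 adm.
have size_rot : size (filter (predC is_refl) v) = 2%N.
  by have [sz6 _ _ _ _] := adm; have := count_predC is_refl v; rewrite size_filter; lia.
have size_refl : size (filter is_refl v) = 4%N by rewrite size_filter.
move: adm_sorted eqv size_refl size_rot.
case: (filter is_refl v) => [|g1 [|g2 [|g3 [|g4 []]]]] //.
case: (filter (predC is_refl) v) => [|h1 [|h2 []]] // adm_sorted eqv _ _.
have [k kk eqv_nf] := hequiv_normal_form_four_refl adm_sorted.
by exists k => //; apply: rst_trans (braid_equiv_hequiv eqv) eqv_nf.
Qed.

Lemma admissible_count2_char2 v : admissible v -> count is_refl v = 2%N -> 1 + 1 = 0 :> 'Z_n.
Proof.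
move=> adm count2; have eqv := braid_equiv_sort adm.
have adm_sorted := (braid_equiv_admissible eqv).1 adm.
have size_rot : size (filter (predC is_refl) v) = 4%N.
  by have [sz6 _ _ _ _] := adm; have := count_predC is_refl v; rewrite size_filter; lia.
have size_refl : size (filter is_refl v) = 2%N by rewrite size_filter.
move: adm_sorted size_refl size_rot.
case: (filter is_refl v) => [|g1 [|g2 []]] //.
case: (filter (predC is_refl) v) => [|h1 [|h2 [|h3 [|h4 []]]]] // adm_sorted _ _.
move: adm_sorted; rewrite /=; set a := g1.1.1; set b := g2.1.1.
set k3 := h1.1.1; set k4 := h2.1.1; set k5 := h3.1.1; set k6 := h4.1.1 => adm_sorted.
have two_torsion_rot k : rot k \in [:: refl a; refl b; rot k3; rot k4; rot k5; rot k6] ->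
    k + k = 0 := admissible_rot adm_sorted.
have [kk3 kk4 kk5 kk6] : [/\ k3 + k3 = 0, k4 + k4 = 0, k5 + k5 = 0 & k6 + k6 = 0].
  by split; apply: two_torsion_rot; rewrite !inE eqxx !orbT.
have ba : (b - a) + (b - a) = 0.
  have baE : b - a = k3 + k4 + k5 + k6.
    case: adm_sorted => _ + _ _ _; rewrite !big_cons big_nil !mulGE /=.
    move=> /(congr1 (fun g => g.1.1)) /= prod1; apply: subr0_eq.
    by rewrite -oppr0 -prod1; ring.
  rewrite baE (_ : _ + _ = (k3 + k3) + (k4 + k4) + (k5 + k5) + (k6 + k6)); last by ring.
  by rewrite kk3 kk4 kk5 kk6 !addr0.
(* Relative to a, all offsets are 2-torsion; for b this is the product relation. *)
pose S := [pred y : 'Z_n | y + y == 0].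
have S_zmod : zmod_closed S.
  split=> [|x y]; rewrite !inE ?addr0 // => /eqP xx /eqP yy.
  by rewrite addrACA -opprD xx yy oppr0 addr0.
apply/eqP; apply: (admissible_offset (a := a) adm_sorted S_zmod).
by move=> g; rewrite !inE /offset => /or4P[|||/or3P[||]] /eqP-> /=;
  rewrite ?subrr ?subr0 ?addr0 ?kk3 ?kk4 ?kk5 ?kk6 ?ba.
Qed.

Lemma hequiv_normal_form_count2 v : admissible v -> count is_refl v = 2%N ->
  exists2 k, k + k = 0 & hequiv v (normal_form k).
Proof.
move=> adm count2; have char2 := admissible_count2_char2 adm count2.
have oppZ (j : 'Z_n) : - j = j by apply: addr0_eq; rewrite -mulr2n -mulr_natr mulr2n char2 mulr0.
(* Now D_n is abelian, and twisting by y exchanges reflections and rotations. *)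
pose z : dihedral n := (0, true).
have zz : (z * z = 1)%g by rewrite dihedral_mulE /= oppr0 addr0.
have zC d : commute d z.
  by case: d => j []; rewrite /commute !dihedral_mulE /= ?oppr0 ?oppZ addr0 add0r.
have adm_tw := admissible_twist zz zC adm.
have count4 : count is_refl (map (twist z) v) = 4%N.
  have [sz6 _ _ snd1 _] := adm; rewrite count_map.
  rewrite (eq_in_count (a2 := predC is_refl)); last first.
    by move=> g /snd1; rewrite /is_refl /twist /= => ->; rewrite eqxx /= addbT.
  by apply/eqP; rewrite -(eqn_add2l 2) -{1}count2 count_predC sz6.
have [k kk eqv] := hequiv_normal_form_count4 adm_tw count4.
by exists k => //; apply: rst_trans (hequiv_twist _ zz zC) eqv.
Qed.

Theorem hurwitz_normal_form v : admissible v ->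
  exists2 k, k + k = 0 & hequiv v (normal_form k).
Proof.
move=> adm; have [] := admissible_count_refl adm.
  exact: hequiv_normal_form_count2.
exact: hequiv_normal_form_count4.
Qed.

End DihedralCoordinates.

Theorem lemma5p11 (n : nat) (hn : (2 <= n)%N) :
  let x := gx n in let y := gy n in let e := ge n in
  let V1 := [:: w1 y; w1 y; w1 (y * x); w1 (y * x); w1 e; w1 e] in
  (odd n ->
     admissible V1 /\ forall v, admissible v -> hequiv v V1) /\
  (forall m : nat, n = (2 * m)%N ->
     forall v : seq (GT n), admissible v ->
       [\/ hequiv v V1,
           hequiv v [:: w1 y; w1 (y * x ^+ m); w1 (y * x); w1 (y * x);
                        w1 (x ^+ m); w1 e],
           odd m /\
           hequiv v [:: w1 y; w1 (y * x ^+ m); w1 (y * x ^+ 2); w1 (y * x ^+ 2);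
                        w1 (x ^+ m); w1 e]
         | n = 2%N /\
           (hequiv v [:: w1 y; w1 y; w1 x; w1 x; w1 e; w1 e] \/
            hequiv v [:: w1 y; w1 (y * x); w1 x; w1 x; w1 x; w1 e])]).
Proof.
move=> x y e V1.
have V1E : V1 = @normal_form n 0%R.
  by rewrite /V1 /normal_form /w1 /refl /rot /y /x /e /gy /gx /ge dihedral_mulE /= add0r.
have NE := Zp_cast hn.
split=> [odd_n | m n2m]; rewrite V1E.
  split=> [|v /hurwitz_normal_form[k kk]]; first exact: normal_form0_admissible.
  by rewrite (Zp_two_torsion_odd _ kk) ?NE.
move=> v /hurwitz_normal_form[k kk]; have [->|k_neq0] := eqVneq k 0%R; first by constructor 1.
have km := Zp_two_torsion_half (etrans NE n2m) kk k_neq0.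
have kN : (- k)%R = k by apply: addr0_eq.
constructor 2; rewrite (_ : [:: _; _; _; _; _; _] = normal_form k) //.
rewrite /normal_form /w1 /refl /rot /y /x /e /gy /gx /ge dihedral_xX !dihedral_mulE /=.
by rewrite -km !add0r kN.
Qed.
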